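(* Let $p>2$ be a prime and $d\geq 2$ an integer with $p-1=df$. Let $\omega$ be a fixed generator of $\mathbb{F}_p^*$, and for $i,j\in\mathbb{Z}/d\mathbb{Z}$ let $(i,j)=\#\{(u,v):0\leq u,v\leq f-1,\ 1+\omega^{du+i}\equiv\omega^{dv+j}\pmod p\}$ be the cyclotomic numbers of order $d$. Let $\theta=0$ if $f$ is even and $\theta=d/2$ if $f$ is odd. Let $a\in\mathbb{F}_p^*\setminus(\mathbb{F}_p^* )^d$ and $\alpha\equiv\mathrm{ind}_\omega(a)\pmod d$. Then $s_d(p,a)=2$ if $(\alpha+\theta,\theta)\neq0$, and otherwise \[ s_d(p,a)=\min\{s\mid \exists\,0\leq i_2,\dots,i_{s-1}\leq d-1:\ (\alpha+\theta,i_2)(i_2,i_3)\cdots(i_{s-1},\theta)\neq0\}. \]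
   Context: For $a\in\mathbb{F}_p^*$, $s_d(p,a)=\min\{k\mid a=\sum_{i=1}^k a_i^d,\ a_i\in\mathbb{F}_p^*\}$. $\mathrm{ind}_\omega(a)$ is the discrete logarithm of $a$ to base $\omega$. Indices of cyclotomic numbers are taken modulo $d$. *)

From mathcomp Require Import all_boot all_algebra.
Set Implicit Arguments. Unset Strict Implicit. Unset Printing Implicit Defensive.
Import GRing.Theory.
Local Open Scope ring_scope.

Definition dsum_repr (p d k : nat) (a : 'F_p) : bool :=
  [exists t : k.-tuple 'F_p, all (fun x => x != 0) t && (a == \sum_(x <- t) x ^+ d)].

Lemma dsum_repr_ex (p d : nat) (a : 'F_p) : exists k, dsum_repr d k a.
Proof.
exists (nat_of_ord a); apply/existsP; exists (nseq_tuple (nat_of_ord a) (1 : 'F_p)).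
apply/andP; split.
  by apply/allP => x /nseqP [-> _]; rewrite oner_eq0.
rewrite /= big_nseq expr1n iter_addr addr0 natr_Zp //.
Qed.

Definition sd (p d : nat) (a : 'F_p) : nat := ex_minn (dsum_repr_ex d a).

Definition cyc (p d f : nat) (w : 'F_p) (i j : nat) : nat :=
  #|[set uv : 'I_f * 'I_f |
      1 + w ^+ (d * uv.1 + i %% d)%N == w ^+ (d * uv.2 + j %% d)%N]|.

Definition theta (d f : nat) : nat := if odd f then d./2 else 0%N.

Definition chain_ok (p d f : nat) (w : 'F_p) (start stop s : nat) : Prop :=
  (2 <= s)%N /\
  exists g : nat -> nat,
    [/\ g 1%N = start, g s = stop,
        (forall k, (2 <= k <= s.-1)%N -> (g k < d)%N) &
        (\prod_(1 <= k < s) cyc d f w (g k) (g k.+1) != 0)%N].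

From mathcomp Require Import all_boot all_algebra finfield.
From mathcomp Require Import zify ring.
Set Implicit Arguments. Unset Strict Implicit. Unset Printing Implicit Defensive.
Import GRing.Theory.
Local Open Scope ring_scope.

(* Write C_i = w^i (F_p^* )^d, so that (i,j) <> 0 iff some x in C_i has 1 + x in C_j.
   If a = b_1^d + ... + b_s^d, then dividing the partial sums by the next d-th power
   shows that the cosets of the nonzero partial sums form a chain
   0 = i_1, ..., i_m = alpha with every (i_k, i_(k+1)) <> 0 and m <= s; conversely such
   a chain is realised by a sum of m d-th powers lying in C_alpha, hence (rescaling) by
   one equal to a.  Since a is not a d-th power, the minimal chain has m >= 2.
   Multiplying by -1, which lies in C_theta, shows that (i,j) <> 0 iff
   (j + theta, i + theta) <> 0, which turns chains from 0 to alpha into the chains from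
   alpha + theta to theta of the statement. *)

Definition rel_chain (R : nat -> nat -> Prop) (g : nat -> nat) (s : nat) : Prop :=
  forall k, (1 <= k < s)%N -> R (g k) (g k.+1).

Lemma rel_chain_rev (R : nat -> nat -> Prop) (h g : nat -> nat) (s : nat) :
  (forall i j, R i j -> R (h j) (h i)) ->
  rel_chain R g s -> rel_chain R (fun k => h (g (s.+1 - k)%N)) s.
Proof.
move=> hR gR k k_in; have /hR : R (g (s - k)%N) (g (s - k).+1) by apply: gR; lia.
by have -> : (s.+1 - k = (s - k).+1)%N by lia.
Qed.

Lemma rel_chain_rcons (R : nat -> nat -> Prop) (g : nat -> nat) (s c : nat) :
  rel_chain R g s -> R (g s) c ->
  rel_chain R (fun k => if k == s.+1 then c else g k) s.+1.
Proof.
move=> gR Rc k /andP [k_gt0 k_lt]; rewrite (ltn_eqF k_lt) eqSS.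
case: (eqVneq k s) => [-> // | k_neq]; apply: gR; lia.
Qed.

Lemma dsum_reprP (p d k : nat) (a : 'F_p) :
  reflect (exists t : seq 'F_p,
             [/\ size t = k, all (fun x => x != 0) t & a = \sum_(x <- t) x ^+ d])
          (dsum_repr d k a).
Proof.
apply: (iffP existsP) => [[t /andP [t_nz /eqP ->]] | [t [t_size t_nz ->]]].
  by exists t; rewrite size_tuple.
have t_size' : size t == k by rewrite t_size.
by exists (Tuple t_size'); rewrite t_nz eqxx.
Qed.

Lemma dsum_repr_scale (p d k : nat) (q a : 'F_p) :
  q != 0 -> dsum_repr d k a -> dsum_repr d k (q ^+ d * a).
Proof.
move=> q_nz /dsum_reprP [t [t_size t_nz ->]]; apply/dsum_reprP.
exists (map ( *%R q) t); split; first by rewrite size_map.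
  by rewrite all_map; apply/allP => x x_t /=; rewrite mulf_neq0 // (allP t_nz).
by rewrite big_map mulr_sumr; apply: eq_bigr => x _; rewrite exprMn.
Qed.

Lemma prim_root_half (R : idomainType) (n : nat) (z : R) :
  n.-primitive_root z -> ~~ odd n -> (0 < n)%N -> z ^+ n./2 = -1.
Proof.
move=> z_prim n_even n_gt0.
have n_eq : n = (n./2 * 2)%N by rewrite -{1}(odd_double_half n) (negPf n_even) muln2.
have z_half_neq1 : z ^+ n./2 != 1.
  rewrite -(expr0 z) (eq_prim_root_expr z_prim) mod0n modn_small; lia.
move: (prim_expr_order z_prim); rewrite {1}n_eq exprM => /eqP.
by rewrite sqrf_eq1 (negPf z_half_neq1) => /eqP.
Qed.

Section PowerCosets.

Variables (F : fieldType) (d : nat) (w : F).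

Definition dcoset (i : nat) (x : F) : Prop := exists2 b, b != 0 & x = b ^+ d * w ^+ i.

Definition cyc_rel (i j : nat) : Prop := exists x, dcoset i x /\ dcoset j (1 + x).

Lemma dcoset_pow b : b != 0 -> dcoset 0 (b ^+ d).
Proof. by exists b; rewrite ?expr0 ?mulr1. Qed.

Lemma dcoset1 : dcoset 0 1.
Proof. by exists 1; rewrite ?oner_eq0 ?expr1n ?expr0 ?mulr1. Qed.

Lemma dcoset_expr e : dcoset e (w ^+ e).
Proof. by exists 1; rewrite ?oner_eq0 ?expr1n ?mul1r. Qed.

Lemma dcosetM i j x y : dcoset i x -> dcoset j y -> dcoset (i + j) (x * y).
Proof.
move=> [b b_nz ->] [c c_nz ->]; exists (b * c); first by rewrite mulf_neq0.
by rewrite exprMn exprD; ring.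
Qed.

Lemma dcoset_ratio i x y : dcoset i x -> dcoset i y -> exists2 q, q != 0 & y = q ^+ d * x.
Proof.
move=> [b b_nz ->] [c c_nz ->]; exists (c / b); first by rewrite mulf_neq0 ?invr_eq0.
by rewrite expr_div_n; field; rewrite expf_neq0.
Qed.

Lemma cyc_rel_rev t i j : dcoset t (-1) -> cyc_rel i j -> cyc_rel (j + t) (i + t).
Proof.
move=> neg1_t [x [x_i x1_j]]; exists (- (1 + x)); split.
  by rewrite addnC -mulN1r; apply: dcosetM.
by rewrite (_ : 1 - (1 + x) = -1 * x) 1?addnC; [apply: dcosetM | ring].
Qed.

Lemma cyc_rel_addX b i j y :
  b != 0 -> dcoset i y -> dcoset j (b ^+ d + y) -> cyc_rel i j.
Proof.
move=> b_nz y_i by_j; have bV_nz : b^-1 != 0 by rewrite invr_eq0.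
exists (b^-1 ^+ d * y); split; first exact: (dcosetM (dcoset_pow bV_nz) y_i).
have -> : 1 + b^-1 ^+ d * y = b^-1 ^+ d * (b ^+ d + y).
  by rewrite exprVn; field; rewrite expf_neq0.
exact: (dcosetM (dcoset_pow bV_nz) by_j).
Qed.

Lemma cyc_rel_lift i j y :
  cyc_rel i j -> dcoset i y -> exists2 b, b != 0 & dcoset j (b ^+ d + y).
Proof.
move=> [x [x_i x1_j]] y_i; have [q q_nz ->] := dcoset_ratio x_i y_i.
by exists q => //; rewrite -[X in X + _]mulr1 -mulrDr; apply: (dcosetM (dcoset_pow q_nz)).
Qed.

Lemma sum_pow_of_rel_chain (g : nat -> nat) (s : nat) :
  (1 <= s)%N -> dcoset (g 1%N) 1 -> rel_chain cyc_rel g s ->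
  exists t : seq F, [/\ size t = s, all (fun x => x != 0) t &
                        dcoset (g s) (\sum_(x <- t) x ^+ d)].
Proof.
move=> + g1; elim: s => [// | [|s] IH] _ gR.
  by exists [:: 1]; rewrite /= big_seq1 expr1n oner_eq0.
have [|t [t_size t_nz t_sum]] := IH isT; first by move=> k k_in; apply: gR; lia.
have [|b b_nz b_sum] := cyc_rel_lift (gR s.+1 _) t_sum; first lia.
by exists (b :: t); rewrite /= t_size b_nz t_nz big_cons.
Qed.

Hypothesis w_neq0 : w != 0.

Lemma dcoset_neq0 i x : dcoset i x -> x != 0.
Proof. by move=> [b b_nz ->]; rewrite mulf_neq0 // expf_neq0. Qed.

Lemma dcoset_mod i x : dcoset (i %% d) x <-> dcoset i x.
Proof.
have w_i : w ^+ i = (w ^+ (i %/ d)) ^+ d * w ^+ (i %% d).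
  by rewrite -exprM -exprD -divn_eq.
have wq_nz : w ^+ (i %/ d) != 0 by rewrite expf_neq0.
split=> [[b b_nz ->] | [b b_nz ->]].
  exists (b / w ^+ (i %/ d)); first by rewrite mulf_neq0 ?invr_eq0.
  by rewrite w_i expr_div_n; field; rewrite expf_neq0.
exists (b * w ^+ (i %/ d)); first by rewrite mulf_neq0.
by rewrite w_i exprMn mulrA.
Qed.

End PowerCosets.

Section PrimeField.

Variables (p d f : nat) (w : 'F_p).
Hypotheses (p_prime : prime p) (pred_p_eq : p.-1 = (d * f)%N)
           (w_prim : p.-1.-primitive_root w).

Lemma pred_p_gt0 : (0 < p.-1)%N.
Proof. by rewrite ltn_predRL prime_gt1. Qed.

Lemma d_gt0 : (0 < d)%N.
Proof. by have := pred_p_gt0; rewrite pred_p_eq; lia. Qed.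

Lemma f_gt0 : (0 < f)%N.
Proof. by have := pred_p_gt0; rewrite pred_p_eq; lia. Qed.

Lemma w_neq0 : w != 0.
Proof. by rewrite (prim_root_eq0 w_prim) -lt0n pred_p_gt0. Qed.

Lemma Fp_fermat (x : 'F_p) : x != 0 -> x ^+ p.-1 = 1.
Proof.
move=> x_nz; apply: (mulIf x_nz); rewrite mul1r -exprSr prednK ?prime_gt0 //.
by rewrite -{2}(expf_card x) card_Fp.
Qed.

Lemma Fp_expr_gen (x : 'F_p) : x != 0 -> exists e, x = w ^+ e.
Proof. by move=> x_nz; have [i ->] := prim_rootP w_prim (Fp_fermat x_nz); exists i. Qed.

Lemma dcoset_exists (x : 'F_p) : x != 0 -> exists i, dcoset d w i x.
Proof. by move=> /Fp_expr_gen [e ->]; exists e; apply: dcoset_expr. Qed.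

Lemma expr_dpow e : (w ^+ e) ^+ d = w ^+ (d * (e %% f)).
Proof.
apply/eqP; rewrite -exprM (eq_prim_root_expr w_prim) pred_p_eq.
by rewrite muln_modr modn_mod mulnC.
Qed.

Lemma dcosetE i (x : 'F_p) : dcoset d w i x <-> exists u : 'I_f, x = w ^+ (d * u + i %% d).
Proof.
rewrite -(dcoset_mod _ w_neq0); split=> [[b b_nz ->] | [u ->]].
  have [e ->] := Fp_expr_gen b_nz.
  by exists (Ordinal (ltn_pmod e f_gt0)); rewrite expr_dpow exprD.
by exists (w ^+ u); rewrite ?expf_neq0 ?w_neq0 // exprD -exprM mulnC.
Qed.

Lemma dcoset_uniq i j (x : 'F_p) : dcoset d w i x -> dcoset d w j x -> i = j %[mod d].
Proof.
move=> /dcosetE [u ->] /dcosetE [v /eqP].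
rewrite (eq_prim_root_expr w_prim) pred_p_eq => /eqP /(congr1 (modn^~ d)).
by rewrite !modn_dvdm ?dvdn_mulr // ![(d * _)%N]mulnC !modnMDl !modn_mod.
Qed.

Lemma cyc_relP i j : reflect (cyc_rel d w i j) (cyc d f w i j != 0)%N.
Proof.
rewrite /cyc -lt0n.
apply: (iffP card_gt0P) => [[[u v]] | [x [/dcosetE [u ->] /dcosetE [v x1_eq]]]].
  rewrite inE /= => /eqP uv_eq; exists (w ^+ (d * u + i %% d)).
  by split; apply/dcosetE; [exists u | exists v].
by exists (u, v); rewrite inE /= x1_eq.
Qed.

Lemma cyc_mod i j i' j' :
  i = i' %[mod d] -> j = j' %[mod d] -> cyc d f w i j = cyc d f w i' j'.
Proof. by rewrite /cyc => -> ->. Qed.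

Lemma prod_cyc_neq0P (g : nat -> nat) (s : nat) :
  (\prod_(1 <= k < s) cyc d f w (g k) (g k.+1) != 0)%N <-> rel_chain (cyc_rel d w) g s.
Proof.
rewrite -lt0n big_nat_cond; split=> [/gt0_prodn_seq cyc_gt0 k k_in | gR].
  by apply/cyc_relP; rewrite -lt0n cyc_gt0 ?mem_index_iota ?k_in.
by apply: prodn_cond_gt0 => k /andP [k_in _]; rewrite lt0n; apply/cyc_relP/gR.
Qed.

Lemma rel_chain_of_sum_pow (t : seq 'F_p) (c : nat) :
  all (fun x => x != 0) t -> dcoset d w c (\sum_(x <- t) x ^+ d) ->
  exists m g, [/\ (1 <= m <= size t)%N, dcoset d w (g 1%N) 1, g m = c &
                  rel_chain (cyc_rel d w) g m].
Proof.
elim: t c => [|x t IH] c /=.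
  by rewrite big_nil => _ /(dcoset_neq0 w_neq0); rewrite eqxx.
case/andP=> x_nz t_nz; rewrite big_cons => sum_c.
have xV_nz : x^-1 != 0 by rewrite invr_eq0.
have [tail0 | tail_nz] := eqVneq (\sum_(y <- t) y ^+ d) 0.
  exists 1%N, (fun=> c); split=> //; last by move=> k; lia.
  have := dcosetM (dcoset_pow d w xV_nz) sum_c.
  by rewrite tail0 addr0 -exprMn mulVf // expr1n add0n.
have [e tail_e] := dcoset_exists tail_nz.
have [m [g [m_bd g1 gm gR]]] := IH e t_nz tail_e.
exists m.+1, (fun k => if k == m.+1 then c else g k); split.
- by move: m_bd; lia.
- by rewrite ifN_eq //; lia.
- by rewrite eqxx.
by apply: rel_chain_rcons; rewrite // gm; apply: cyc_rel_addX x_nz tail_e sum_c.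
Qed.

Lemma dsum_repr_of_rel_chain (g : nat -> nat) (s : nat) (a : 'F_p) :
  (1 <= s)%N -> dcoset d w (g 1%N) 1 -> rel_chain (cyc_rel d w) g s ->
  dcoset d w (g s) a -> dsum_repr d s a.
Proof.
move=> s_gt0 g1 gR a_gs; have [t [t_size t_nz t_sum]] := sum_pow_of_rel_chain s_gt0 g1 gR.
have [q q_nz ->] := dcoset_ratio t_sum a_gs.
by apply: dsum_repr_scale q_nz _; apply/dsum_reprP; exists t.
Qed.

Lemma chain_ok_rel_chain i j s :
  chain_ok d f w i j s ->
  (2 <= s)%N /\ exists g, [/\ g 1%N = i, g s = j & rel_chain (cyc_rel d w) g s].
Proof. by case=> s_ge2 [g [g1 gs _ /prod_cyc_neq0P gR]]; split; last exists g. Qed.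

(* The witness reduces the interior indices mod d, which cyc does not notice. *)
Lemma rel_chain_chain_ok i j s (g : nat -> nat) :
  (2 <= s)%N -> g 1%N = i %[mod d] -> g s = j %[mod d] ->
  rel_chain (cyc_rel d w) g s -> chain_ok d f w i j s.
Proof.
move=> s_ge2 g1 gs gR; split=> //.
pose h k := if k == 1%N then i else if k == s then j else (g k %% d)%N.
have h_mod k : h k = g k %[mod d].
  rewrite /h; case: eqP => [-> | _]; first by rewrite g1.
  by case: eqP => [-> | _]; rewrite ?gs ?modn_mod.
exists h; split.
- by rewrite /h eqxx.
- by rewrite /h eqxx ifN_eq //; lia.
- by move=> k k_in; rewrite /h !ifN_eq ?ltn_pmod ?d_gt0 //; lia.
rewrite (eq_big_nat _ _ (F2 := fun k => cyc d f w (g k) (g k.+1))).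
  exact/prod_cyc_neq0P.
by move=> k _; apply: cyc_mod.
Qed.

Hypothesis p_gt2 : (2 < p)%N.

(* -1 = w^((p-1)/2) and (p-1)/2 = d * (f/2) + theta. *)
Lemma dcoset_theta : dcoset d w (theta d f) (-1).
Proof.
have p_odd : odd p by case: (even_prime p_prime) p_gt2 => [-> //|].
have pred_p_even : ~~ odd p.-1.
  by move: p_odd; rewrite -{1}(prednK (prime_gt0 p_prime)).
rewrite -(prim_root_half w_prim pred_p_even pred_p_gt0).
exists (w ^+ f./2); first by rewrite expf_neq0 // w_neq0.
rewrite -exprM -exprD; congr (_ ^+ _); rewrite /theta.
move: pred_p_even; rewrite pred_p_eq.
have := odd_double_half (d * f); have := odd_double_half d; have := odd_double_half f.
rewrite oddM; case: (odd f); case: (odd d) => //=; nia.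
Qed.

Lemma cyc_rel_rev_theta i j :
  cyc_rel d w i j -> cyc_rel d w (j + theta d f) (i + theta d f).
Proof. exact: cyc_rel_rev dcoset_theta. Qed.

Lemma dcoset_theta2 : dcoset d w (theta d f + theta d f) 1.
Proof. by have := dcosetM dcoset_theta dcoset_theta; rewrite mulrNN mulr1. Qed.

Variables (a : 'F_p) (alpha : nat).
Hypotheses (a_alpha : dcoset d w alpha a)
           (a_not_pow : ~ exists b : 'F_p, b != 0 /\ b ^+ d = a).

Lemma dsum_repr_of_chain_ok s :
  chain_ok d f w (alpha + theta d f) (theta d f) s -> dsum_repr d s a.
Proof.
case/chain_ok_rel_chain => s_ge2 [g [g1 gs gR]].
have gR' := rel_chain_rev (h := addn^~ (theta d f)) cyc_rel_rev_theta gR.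
apply: (dsum_repr_of_rel_chain _ _ gR'); first lia.
  by rewrite subSS subn0 gs; apply: dcoset_theta2.
have -> : (s.+1 - s = 1)%N by lia.
by rewrite g1 -addnA; have := dcosetM a_alpha dcoset_theta2; rewrite mulr1.
Qed.

Lemma chain_ok_of_dsum_repr s :
  dsum_repr d s a -> exists2 m, (m <= s)%N & chain_ok d f w (alpha + theta d f) (theta d f) m.
Proof.
case/dsum_reprP => t [t_size t_nz a_sum].
have sum_alpha : dcoset d w alpha (\sum_(x <- t) x ^+ d) by rewrite -a_sum.
have [m [g [m_bd g1 gm gR]]] := rel_chain_of_sum_pow t_nz sum_alpha.
exists m; first by rewrite -t_size; case/andP: m_bd.
have m_ge2 : (2 <= m)%N.
  case: (ltnP 1 m) => // m_le1; have m1 : m = 1%N by lia.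
  rewrite m1 in gm; rewrite gm in g1.
  have [q q_nz a_eq] := dcoset_ratio g1 a_alpha.
  by case: a_not_pow; exists q; rewrite a_eq mulr1.
have gR' := rel_chain_rev (h := addn^~ (theta d f)) cyc_rel_rev_theta gR.
apply: (rel_chain_chain_ok m_ge2 _ _ gR'); first by rewrite subSS subn0 gm.
have -> : (m.+1 - m = 1)%N by lia.
by rewrite -modnDml (dcoset_uniq g1 (dcoset1 d w)) mod0n.
Qed.

Lemma sd_chain_ok : chain_ok d f w (alpha + theta d f) (theta d f) (sd d a).
Proof.
rewrite /sd; case: ex_minnP => s s_repr s_min.
have [m m_le m_ok] := chain_ok_of_dsum_repr s_repr.
suff -> : s = m by [].
by apply/eqP; rewrite eqn_leq m_le s_min // dsum_repr_of_chain_ok.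
Qed.

Lemma sd_le_chain_ok s : chain_ok d f w (alpha + theta d f) (theta d f) s -> (sd d a <= s)%N.
Proof. by move/dsum_repr_of_chain_ok; rewrite /sd; case: ex_minnP => m _; apply. Qed.

End PrimeField.

Theorem theorem1 (p d f : nat) (w a : 'F_p) (alpha : nat) :
  prime p -> (2 < p)%N -> (2 <= d)%N -> p.-1 = (d * f)%N ->
  (p.-1).-primitive_root w ->
  a != 0 -> ~ (exists b : 'F_p, b != 0 /\ b ^+ d = a) ->
  (exists e : nat, w ^+ e = a /\ e = alpha %[mod d]) ->
  ((cyc d f w (alpha + theta d f) (theta d f) != 0)%N -> sd d a = 2%N) /\
  (cyc d f w (alpha + theta d f) (theta d f) = 0%N ->
     chain_ok d f w (alpha + theta d f) (theta d f) (sd d a) /\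
     forall s, chain_ok d f w (alpha + theta d f) (theta d f) s -> (sd d a <= s)%N).
Proof.
move=> p_prime p_gt2 _ pred_p_eq w_prim _ a_not_pow [e [a_eq e_alpha]].
have w_nz := w_neq0 p_prime w_prim.
have a_alpha : dcoset d w alpha a.
  by apply/(dcoset_mod d w_nz); rewrite -e_alpha -a_eq; apply/(dcoset_mod d w_nz)/dcoset_expr.
have sd_ok := sd_chain_ok p_prime pred_p_eq w_prim p_gt2 a_alpha a_not_pow.
have sd_min := sd_le_chain_ok p_prime pred_p_eq w_prim p_gt2 a_alpha.
split=> [cyc_neq0 | _]; last exact: conj sd_ok sd_min.
apply/eqP; rewrite eqn_leq (proj1 sd_ok) andbT; apply: sd_min; split=> //.
exists (fun k => if k == 1%N then alpha + theta d f else theta d f)%N.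
by split=> // [k | ]; [lia | rewrite big_nat1].
Qed.
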